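(* For each librational traveling wave $f$ there exists a real number $\alpha_*>0$ with $\alpha_*\in\sigma(\mathrm{Q})$; and if in addition $c\neq0$, then $G_p(\alpha_* )>0$ for every such $\alpha_*$.
   Context: A traveling wave of speed $c$ ($c^2\neq1$) is a real solution $f$ of $(c^2-1)f''+\sin f=0$, with energy $E$ given by $\tfrac12(c^2-1)(f')^2+1-\cos f=E$; it is librational if $0<E<2$, and then periodic with fundamental period $T$ (smallest $T>0$ with $f(z+T)=f(z)\pmod{2\pi}$). Let $\gamma=1/(c^2-1)$. $\sigma(\mathrm{Q})$ is the set of $\lambda\in\mathbb{C}$ for which $q''+\gamma\cos(f(z))q=\gamma^2\lambda^2q$ has a nontrivial solution bounded on $\mathbb{R}$. Equation (P): $p''-2c\gamma\lambda p'+\gamma(\lambda^2+\cos f(z))p=0$, written as a first-order system for $(p,p')$ with fundamental matrix $F(z;\lambda)$, $F(0;\lambda)=I$; its Floquet multipliers $\rho_\pm(\lambda)$ are the eigenvalues of $F(T;\lambda)$. Define $G_p(\lambda)=\log|\rho_+(\lambda)|\log|\rho_-(\lambda)|$. *)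

From Stdlib Require Import Reals ZArith.
From Coquelicot Require Import Coquelicot.
Open Scope R_scope.

Definition gam (c : R) : R := / (c ^ 2 - 1).

Definition traveling_wave (c : R) (f : R -> R) : Prop :=
  c ^ 2 <> 1 /\
  forall z, ex_derive f z /\ ex_derive (Derive f) z /\
            (c ^ 2 - 1) * Derive (Derive f) z + sin (f z) = 0.

Definition wave_energy (c : R) (f : R -> R) (z : R) : R :=
  / 2 * (c ^ 2 - 1) * (Derive f z) ^ 2 + 1 - cos (f z).

Definition librational_wave (c : R) (f : R -> R) : Prop :=
  traveling_wave c f /\
  exists E, 0 < E < 2 /\ forall z, wave_energy c f z = E.

Definition period_mod_2pi (f : R -> R) (T : R) : Prop :=
  forall z, exists k : Z, f (z + T) = f z + 2 * PI * IZR k.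

Definition fundamental_period (f : R -> R) (T : R) : Prop :=
  0 < T /\ period_mod_2pi f T /\
  forall T', 0 < T' -> period_mod_2pi f T' -> T <= T'.

Definition in_sigmaQ (c : R) (f : R -> R) (lam : C) : Prop :=
  exists q q' q'' : R -> C,
    (exists z, q z <> 0%C) /\
    (exists M : R, forall z, Cmod (q z) <= M) /\
    forall z, is_derive q z (q' z) /\ is_derive q' z (q'' z) /\
      (q'' z + RtoC (gam c * cos (f z)) * q z
        = RtoC (gam c ^ 2) * (lam * lam) * q z)%C.

Definition solves_P (c : R) (f : R -> R) (lam : C) (p p' p'' : R -> C) : Prop :=
  forall z, is_derive p z (p' z) /\ is_derive p' z (p'' z) /\
    (p'' z - RtoC (2 * c * gam c) * lam * p' z
      + RtoC (gam c) * (lam * lam + RtoC (cos (f z))) * p z = 0)%C.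

(** (a, b, d, e) = F(T; lambda) = [[a, b], [d, e]], the monodromy matrix of the
    first-order system for (p, p'), with columns the solutions with
    initial data (1,0) and (0,1). *)
Definition monodromy (c : R) (f : R -> R) (lam : C) (T : R)
    (a b d e : C) : Prop :=
  exists p1 p1' p1'' p2 p2' p2'' : R -> C,
    solves_P c f lam p1 p1' p1'' /\ solves_P c f lam p2 p2' p2'' /\
    p1 0 = 1%C /\ p1' 0 = 0%C /\ p2 0 = 0%C /\ p2' 0 = 1%C /\
    a = p1 T /\ b = p2 T /\ d = p1' T /\ e = p2' T.

(** rho1, rho2 are the Floquet multipliers (eigenvalues, with multiplicity)
    of [[a, b], [d, e]]: x^2 - (a+e) x + (a e - b d) = (x - rho1)(x - rho2). *)
Definition eigenpair2 (a b d e rho1 rho2 : C) : Prop :=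
  (rho1 + rho2 = a + e /\ rho1 * rho2 = a * e - b * d)%C.

Definition Gp_pos (c : R) (f : R -> R) (T : R) (lam : C) : Prop :=
  forall a b d e, monodromy c f lam T a b d e ->
  forall rho1 rho2, eigenpair2 a b d e rho1 rho2 ->
  0 < ln (Cmod rho1) * ln (Cmod rho2).

(* For a librational wave, cos (f/2) (when c^2 > 1) and sin (f/2) (when c^2 < 1) are bounded,
   nonzero solutions of (Q) with alpha^2 = (1 - E/2)(c^2 - 1), resp. -(E/2)(c^2 - 1), both positive.

   For real alpha, (P) is the real equation p'' = 2 k p' - B p with k = c gamma alpha and
   B = gamma (alpha^2 + cos f) bounded and T-periodic, so its monodromy matrix is real, with
   determinant e^(2kT) by Abel's formula, and p = e^(kz) y sends solutions y of (Q) to solutions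
   of (P). Cayley-Hamilton for the monodromy matrix then gives
   y(s+2T) - (tr F(T) / e^(kT)) y(s+T) + y(s) = 0 for a bounded nonzero solution y of (Q).
   The normalized multipliers rho / e^(kT) have product 1, and such a recurrence has a bounded
   nonzero solution only if both have modulus 1. Hence |rho_+| = |rho_-| = e^(kT) and
   G_p = (kT)^2 > 0 when c <> 0. *)

From Stdlib Require Import Reals ZArith Lra Psatz.
From Coquelicot Require Import Coquelicot.
Open Scope R_scope.

Lemma is_derive_Re (g : R -> C) x l :
  is_derive g x l -> is_derive (fun t => Re (g t)) x (Re l).
Proof.
  intros H. eapply filterdiff_ext_lin.
  - apply (filterdiff_comp' g (fun w : C_R_NormedModule => fst w) x _
             (fun w : C_R_NormedModule => fst w) H).
    apply filterdiff_linear, is_linear_fst.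
  - reflexivity.
Qed.

Lemma is_derive_Im (g : R -> C) x l :
  is_derive g x l -> is_derive (fun t => Im (g t)) x (Im l).
Proof.
  intros H. eapply filterdiff_ext_lin.
  - apply (filterdiff_comp' g (fun w : C_R_NormedModule => snd w) x _
             (fun w : C_R_NormedModule => snd w) H).
    apply filterdiff_linear, is_linear_snd.
  - reflexivity.
Qed.

Lemma is_derive_RtoC (g : R -> R) x l :
  is_derive g x l -> is_derive (fun t => RtoC (g t)) x (RtoC l).
Proof.
  intros H. eapply filterdiff_ext_lin.
  - apply (filterdiff_comp' g (fun r : R => RtoC r) x _ (fun r : R => RtoC r) H).
    apply filterdiff_linear.
    exact (is_linear_prod (K := R_AbsRing) (T := R_NormedModule) (U := R_NormedModule)
             (V := R_NormedModule) (fun r => r) (fun _ => zero) is_linear_id is_linear_zero).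
  - intros r. apply injective_projections; simpl; unfold scal; simpl; unfold mult; simpl; ring.
Qed.

(* [auto_derive], with the differentiability side goals and the [Derive] terms discharged by the
   [is_derive] hypotheses in context. *)
Ltac auto_derive_hyps :=
  auto_derive; repeat split; try (eexists; eassumption);
  repeat match goal with
  | H : is_derive ?g ?z ?l |- context [Derive (fun x => ?g x) ?z] =>
      replace (Derive (fun x => g x) z) with l by (symmetry; apply is_derive_unique, H)
  end.

Lemma nonincreasing_of_derive_nonpos (g dg : R -> R) :
  (forall x, is_derive g x (dg x)) -> (forall x, dg x <= 0) ->
  forall a b, a <= b -> g b <= g a.
Proof.
  intros Hd Hneg a b Hab.
  destruct (MVT_gen g a b dg) as [x [_ Hx]].
  - intros x _. apply Hd.
  - intros x _. apply continuity_pt_filterlim, (ex_derive_continuous (V := R_NormedModule)).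
    eexists. apply Hd.
  - specialize (Hneg x). nra.
Qed.

Lemma gronwall_zero (h dh : R -> R) (C : R) :
  (forall z, is_derive h z (dh z)) -> (forall z, Rabs (dh z) <= C * h z) ->
  (forall z, 0 <= h z) -> h 0 = 0 -> forall z, h z = 0.
Proof.
  intros Hd Hbound Hpos H0 z. apply Rle_antisym; [|apply Hpos].
  destruct (Rle_or_lt 0 z) as [Hz | Hz].
  - assert (Hdecr : h z * exp (- (C * z)) <= h 0 * exp (- (C * 0))).
    { apply (nonincreasing_of_derive_nonpos (fun x => h x * exp (- (C * x)))
             (fun x => (dh x - C * h x) * exp (- (C * x))));
        [intros x | intros x | exact Hz].
      - specialize (Hd x). auto_derive_hyps. ring.
      - pose proof (exp_pos (- (C * x))). pose proof (Rle_abs (dh x)).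
        specialize (Hbound x). nra. }
    rewrite H0 in Hdecr. pose proof (exp_pos (- (C * z))). nra.
  - assert (Hdecr : - (h 0 * exp (C * 0)) <= - (h z * exp (C * z))).
    { apply (nonincreasing_of_derive_nonpos (fun x => - (h x * exp (C * x)))
             (fun x => - ((dh x + C * h x) * exp (C * x))));
        [intros x | intros x | lra].
      - specialize (Hd x). auto_derive_hyps. ring.
      - pose proof (exp_pos (C * x)). pose proof (Rle_abs (- dh x)). rewrite Rabs_Ropp in *.
        specialize (Hbound x). nra. }
    rewrite H0 in Hdecr. pose proof (exp_pos (C * z)). nra.
Qed.

Definition solves_ode2 (k : R) (B : R -> R) (u u' u'' : R -> R) : Prop :=
  forall z, is_derive u z (u' z) /\ is_derive u' z (u'' z) /\
            u'' z = 2 * k * u' z - B z * u z.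

Lemma ode2_energy_derive_bound k B K u u' u'' :
  (forall z, Rabs (B z) <= K) -> solves_ode2 k B u u' u'' ->
  forall z, Rabs (2 * u z * u' z + 2 * u' z * u'' z)
            <= (1 + 4 * Rabs k + K) * (u z ^ 2 + u' z ^ 2).
Proof.
  intros HB Hu z. destruct (Hu z) as [_ [_ ->]].
  set (U := u z); set (V := u' z); set (b := B z).
  assert (HUV : Rabs (2 * U * V) <= U ^ 2 + V ^ 2).
  { apply Rabs_le. pose proof (pow2_ge_0 (U - V)). pose proof (pow2_ge_0 (U + V)). split; nra. }
  assert (HkV : Rabs (4 * k * V ^ 2) <= 4 * Rabs k * (U ^ 2 + V ^ 2)).
  { rewrite !Rabs_mult, (Rabs_pos_eq 4), (Rabs_pos_eq (V ^ 2)) by nra.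
    pose proof (Rabs_pos k). nra. }
  assert (HbUV : Rabs (b * (2 * U * V)) <= K * (U ^ 2 + V ^ 2)).
  { rewrite Rabs_mult. apply Rmult_le_compat; auto using Rabs_pos. apply HB. }
  replace (2 * U * V + 2 * V * (2 * k * V - b * U))
    with (2 * U * V + 4 * k * V ^ 2 + - (b * (2 * U * V))) by ring.
  eapply Rle_trans; [apply Rabs_triang|]. rewrite Rabs_Ropp.
  eapply Rle_trans; [apply Rplus_le_compat_r, Rabs_triang|]. lra.
Qed.

Lemma ode2_unique k B K u u' u'' :
  (forall z, Rabs (B z) <= K) -> solves_ode2 k B u u' u'' ->
  u 0 = 0 -> u' 0 = 0 -> forall z, u z = 0 /\ u' z = 0.
Proof.
  intros HB Hu H0 H0' z.
  assert (Henergy : u z ^ 2 + u' z ^ 2 = 0).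
  { apply (gronwall_zero (fun z => u z ^ 2 + u' z ^ 2)
             (fun z => 2 * u z * u' z + 2 * u' z * u'' z) (1 + 4 * Rabs k + K)).
    - intros x. destruct (Hu x) as [Hd [Hd' _]]. auto_derive_hyps. ring.
    - exact (ode2_energy_derive_bound k B K u u' u'' HB Hu).
    - intros x. nra.
    - rewrite H0, H0'. ring. }
  split; nra.
Qed.

Lemma ode2_lincomb k B a b u u' u'' v v' v'' :
  solves_ode2 k B u u' u'' -> solves_ode2 k B v v' v'' ->
  solves_ode2 k B (fun z => a * u z + b * v z) (fun z => a * u' z + b * v' z)
                  (fun z => a * u'' z + b * v'' z).
Proof.
  intros Hu Hv z. destruct (Hu z) as [U1 [U2 U3]], (Hv z) as [V1 [V2 V3]].
  split; [|split]; [auto_derive_hyps; ring | auto_derive_hyps; ring | rewrite U3, V3; ring].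
Qed.

Lemma ode2_shift k B S u u' u'' :
  (forall z, B (z + S) = B z) -> solves_ode2 k B u u' u'' ->
  solves_ode2 k B (fun z => u (z + S)) (fun z => u' (z + S)) (fun z => u'' (z + S)).
Proof.
  intros HS Hu z. destruct (Hu (z + S)) as [U1 [U2 U3]].
  split; [|split]; [auto_derive_hyps; ring | auto_derive_hyps; ring | rewrite U3, HS; ring].
Qed.

Lemma ode2_exp_mul k B y y' y'' :
  (forall z, is_derive y z (y' z) /\ is_derive y' z (y'' z) /\ y'' z = (k ^ 2 - B z) * y z) ->
  solves_ode2 k B (fun z => exp (k * z) * y z) (fun z => exp (k * z) * (y' z + k * y z))
    (fun z => exp (k * z) * (y'' z + 2 * k * y' z + k ^ 2 * y z)).
Proof.
  intros Hy z. destruct (Hy z) as [Y1 [Y2 Y3]].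
  split; [|split]; [auto_derive_hyps; ring | auto_derive_hyps; ring | rewrite Y3; ring].
Qed.

Lemma le_geometric_nonpos (v M r : R) :
  0 <= r < 1 -> (forall n, v <= M * r ^ n) -> v <= 0.
Proof.
  intros Hr Hv. apply Rnot_lt_le. intros Hpos.
  assert (HM : 0 <= M) by (specialize (Hv O); simpl in Hv; lra).
  destruct (pow_lt_1_zero r ltac:(rewrite Rabs_pos_eq; lra) (v / (M + 1)))
    as [N HN]; [apply Rdiv_lt_0_compat; lra|].
  specialize (HN N (le_n N)). specialize (Hv N).
  rewrite Rabs_pos_eq in HN by (apply pow_le; lra).
  apply (Rmult_lt_compat_l (M + 1)) in HN; [|lra].
  replace ((M + 1) * (v / (M + 1))) with v in HN by (field; lra).
  pose proof (pow_le r N). nra.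
Qed.

Lemma Cmod_iter_shift (g : R -> C) (x : C) (T : R) :
  (forall s, g (s + T) = (x * g s)%C) ->
  forall n s, Cmod (g (s + INR n * T)) = Cmod x ^ n * Cmod (g s).
Proof.
  intros Hg n. induction n as [|n IH]; intros s.
  - simpl. rewrite Rmult_0_l, Rplus_0_r. ring.
  - rewrite S_INR. replace (s + (INR n + 1) * T) with (s + INR n * T + T) by ring.
    rewrite Hg, Cmod_mult, IH. simpl. ring.
Qed.

Lemma bounded_shift_eigenfunction_zero (g : R -> C) (x : C) (T M : R) :
  (forall s, Cmod (g s) <= M) -> (forall s, g (s + T) = (x * g s)%C) -> Cmod x <> 1 ->
  forall s, g s = 0%C.
Proof.
  intros Hb Hg Hx s. apply Cmod_eq_0, Rle_antisym; [|apply Cmod_ge_0].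
  pose proof (Cmod_ge_0 x) as Hx0.
  destruct (Rlt_or_le 1 (Cmod x)) as [Hgt | Hle].
  - apply (le_geometric_nonpos _ M (/ Cmod x)).
    + split; [left; apply Rinv_0_lt_compat; lra|].
      rewrite <- Rinv_1. apply Rinv_lt_contravar; lra.
    + intros n. rewrite pow_inv.
      assert (Hpos : 0 < Cmod x ^ n) by (apply pow_lt; lra).
      apply (Rmult_le_reg_l (Cmod x ^ n)); [exact Hpos|].
      rewrite <- Cmod_iter_shift with (T := T) by exact Hg.
      replace (Cmod x ^ n * (M * / Cmod x ^ n)) with M by (field; lra).
      apply Hb.
  - apply (le_geometric_nonpos _ M (Cmod x)); [lra|].
    intros n. replace s with (s - INR n * T + INR n * T) at 1 by ring.
    rewrite (Cmod_iter_shift g x T Hg), (Rmult_comm M).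
    apply Rmult_le_compat_l; [apply pow_le, Cmod_ge_0 | apply Hb].
Qed.

Lemma bounded_recurrence_unimodular (Y : R -> C) (T : R) (x1 x2 : C) :
  (exists M, forall s, Cmod (Y s) <= M) -> (exists s, Y s <> 0%C) -> (x1 * x2 = 1)%C ->
  (forall s : R, Y (s + 2 * T)%R - (x1 + x2) * Y (s + T)%R + Y s = 0)%C ->
  Cmod x1 = 1 /\ Cmod x2 = 1.
Proof.
  intros [M HM] [s0 Hs0] H12 Hrec.
  assert (Hmod : Cmod x1 * Cmod x2 = 1) by (rewrite <- Cmod_mult, H12; apply Cmod_1).
  (* Y(s+T) - xj Y(s) is multiplied by xi under the shift by T. *)
  assert (Hshift : forall xi xj : C, (xi + xj = x1 + x2)%C -> (xi * xj = 1)%C ->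
            forall s : R, (Y (s + T + T)%R - xj * Y (s + T)%R = xi * (Y (s + T)%R - xj * Y s))%C).
  { intros xi xj Hsum Hij s. replace (s + T + T) with (s + 2 * T) by ring.
    pose proof (Hrec s) as E. rewrite <- Hsum in E.
    transitivity ((Y (s + 2 * T)%R - (xi + xj) * Y (s + T)%R + Y s) + xi * Y (s + T)%R - 1 * Y s)%C;
      [ring|].
    rewrite E, <- Hij. ring. }
  assert (Hbound : forall (x : C) s, Cmod (Y (s + T)%R - x * Y s)%C <= M + Cmod x * M).
  { intros x s. eapply Rle_trans; [apply Cmod_triangle|].
    rewrite Cmod_opp, Cmod_mult. pose proof (Cmod_ge_0 x). pose proof (HM (s + T)).
    pose proof (HM s). nra. }
  destruct (Req_dec (Cmod x1) 1) as [H1 | H1].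
  { split; [exact H1 | rewrite H1 in Hmod; lra]. }
  exfalso. apply Hs0.
  assert (H2 : Cmod x2 <> 1) by (intros H2; rewrite H2 in Hmod; lra).
  assert (Hb := bounded_shift_eigenfunction_zero (fun s => Y (s + T)%R - x2 * Y s)%C x1 T _
                  (Hbound x2) (Hshift x1 x2 eq_refl H12) H1 s0).
  assert (Hc := bounded_shift_eigenfunction_zero (fun s => Y (s + T)%R - x1 * Y s)%C x2 T _
                  (Hbound x1) (Hshift x2 x1 (Cplus_comm _ _) (eq_trans (Cmult_comm _ _) H12))
                  H2 s0).
  assert (Hdiff : (x1 - x2)%C <> 0%C).
  { intros E. assert (Heq : x1 = x2) by (transitivity ((x1 - x2) + x2)%C; [ring | rewrite E; ring]).
    subst x1. pose proof (Cmod_ge_0 x2). nra. }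
  transitivity (/ (x1 - x2) * ((Y (s0 + T)%R - x2 * Y s0) - (Y (s0 + T)%R - x1 * Y s0)))%C;
    [field; exact Hdiff|].
  simpl in Hb, Hc. rewrite Hb, Hc. ring.
Qed.

Lemma const_of_derive_zero (g : R -> R) :
  (forall x, is_derive g x 0) -> forall a b, g a = g b.
Proof.
  intros Hd.
  assert (Hle : forall a b, a <= b -> g a = g b).
  { intros a b Hab. apply Rle_antisym.
    - assert (Hopp : - g b <= - g a).
      { apply (nonincreasing_of_derive_nonpos (fun x => - g x) (fun _ => - 0)); [|intros; lra | exact Hab].
        intros x. apply (is_derive_opp g x 0), Hd. }
      lra.
    - apply (nonincreasing_of_derive_nonpos g (fun _ => 0)); [exact Hd | intros; lra | exact Hab]. }
  intros a b. destruct (Rle_or_lt a b); [|symmetry]; auto with real.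
Qed.

Section FundamentalSolutions.

Variables (k : R) (B : R -> R).
Variables (P1 P1' P1'' P2 P2' P2'' : R -> R).
Hypothesis P1_sol : solves_ode2 k B P1 P1' P1''.
Hypothesis P2_sol : solves_ode2 k B P2 P2' P2''.
Hypothesis P1_init : P1 0 = 1 /\ P1' 0 = 0.
Hypothesis P2_init : P2 0 = 0 /\ P2' 0 = 1.

Lemma ode2_wronskian T : P1 T * P2' T - P2 T * P1' T = exp (2 * k * T).
Proof.
  assert (Hconst : forall a b,
    (P1 a * P2' a - P2 a * P1' a) * exp (- (2 * k * a))
    = (P1 b * P2' b - P2 b * P1' b) * exp (- (2 * k * b))).
  { apply (const_of_derive_zero (fun z => (P1 z * P2' z - P2 z * P1' z) * exp (- (2 * k * z)))).
    intros z. destruct (P1_sol z) as [A1 [A2 A3]], (P2_sol z) as [B1 [B2 B3]].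
    auto_derive_hyps. rewrite A3, B3. ring. }
  specialize (Hconst T 0). destruct P1_init as [I1 I1'], P2_init as [I2 I2'].
  rewrite I1, I1', I2, I2', exp_Ropp in Hconst.
  pose proof (exp_pos (2 * k * T)).
  apply (Rmult_eq_reg_r (/ exp (2 * k * T))); [|apply Rinv_neq_0_compat; lra].
  rewrite Hconst, Rinv_r by lra. replace (- (2 * k * 0)) with 0 by ring. rewrite exp_0. ring.
Qed.

Variable K : R.
Hypothesis B_bounded : forall z, Rabs (B z) <= K.

Lemma ode2_fundamental_expansion u u' u'' : solves_ode2 k B u u' u'' -> forall z,
  u z = u 0 * P1 z + u' 0 * P2 z /\ u' z = u 0 * P1' z + u' 0 * P2' z.
Proof.
  intros Hu z.
  destruct (ode2_unique k B K _ _ _ B_bounded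
              (ode2_lincomb k B 1 (-1) _ _ _ _ _ _ Hu
                 (ode2_lincomb k B (u 0) (u' 0) _ _ _ _ _ _ P1_sol P2_sol)))
    with z as [E1 E2].
  - destruct P1_init as [-> _], P2_init as [-> _]. ring.
  - destruct P1_init as [_ ->], P2_init as [_ ->]. ring.
  - split; lra.
Qed.

(* Cayley-Hamilton for the monodromy matrix, read off on an arbitrary solution. *)
Lemma ode2_monodromy_recurrence T : (forall z, B (z + T) = B z) ->
  forall u u' u'', solves_ode2 k B u u' u'' -> forall z,
  u (z + 2 * T) - (P1 T + P2' T) * u (z + T) + (P1 T * P2' T - P2 T * P1' T) * u z = 0.
Proof.
  intros HT u u' u'' Hu.
  assert (HT2 : forall z, B (z + 2 * T) = B z).
  { intros z. replace (z + 2 * T) with (z + T + T) by ring. rewrite !HT. reflexivity. }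
  pose proof (ode2_shift k B T _ _ _ HT Hu) as Hv.
  destruct (ode2_fundamental_expansion _ _ _ Hu T) as [D1 D2].
  destruct (ode2_fundamental_expansion _ _ _ Hv T) as [D3 D4].
  rewrite Rplus_0_l in D3, D4. replace (T + T) with (0 + 2 * T) in D3, D4 by ring.
  intros z.
  destruct (ode2_unique k B K _ _ _ B_bounded
              (ode2_lincomb k B 1 1 _ _ _ _ _ _ (ode2_shift k B (2 * T) _ _ _ HT2 Hu)
                 (ode2_lincomb k B (- (P1 T + P2' T)) (P1 T * P2' T - P2 T * P1' T)
                    _ _ _ _ _ _ Hv Hu)))
    with z as [E _]; simpl.
  - rewrite D3, Rplus_0_l, D1, D2. ring.
  - rewrite D4, Rplus_0_l, D1, D2. ring.
  - lra.
Qed.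

Lemma ode2_exp_mul_recurrence T y y' y'' :
  (forall z, B (z + T) = B z) ->
  (forall z, is_derive y z (y' z) /\ is_derive y' z (y'' z) /\ y'' z = (k ^ 2 - B z) * y z) ->
  forall s, y (s + 2 * T) - (P1 T + P2' T) / exp (k * T) * y (s + T) + y s = 0.
Proof.
  intros HT Hy s.
  pose proof (ode2_monodromy_recurrence T HT _ _ _ (ode2_exp_mul k B y y' y'' Hy) s) as Hs.
  rewrite ode2_wronskian in Hs. simpl in Hs.
  set (E := exp (k * T)) in *.
  replace (exp (k * (s + 2 * T))) with (exp (k * s) * E * E) in Hs
    by (unfold E; rewrite <- !exp_plus; f_equal; ring).
  replace (exp (k * (s + T))) with (exp (k * s) * E) in Hs
    by (unfold E; rewrite <- !exp_plus; f_equal; ring).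
  replace (exp (2 * k * T)) with (E * E) in Hs
    by (unfold E; rewrite <- !exp_plus; f_equal; ring).
  pose proof (exp_pos (k * s)). assert (HE : 0 < E) by apply exp_pos.
  apply (Rmult_eq_reg_l (exp (k * s) * E * E)); [|apply Rgt_not_eq, Rmult_gt_0_compat; nra].
  rewrite Rmult_0_r, <- Hs. field. lra.
Qed.

Lemma ode2_multipliers_modulus T y y' y'' rho1 rho2 :
  (forall z, B (z + T) = B z) ->
  (forall z, is_derive y z (y' z) /\ is_derive y' z (y'' z) /\ y'' z = (k ^ 2 - B z) * y z) ->
  (exists M, forall z, Rabs (y z) <= M) -> (exists z, y z <> 0) ->
  (rho1 + rho2 = RtoC (P1 T + P2' T))%C ->
  (rho1 * rho2 = RtoC (P1 T * P2' T - P2 T * P1' T))%C ->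
  Cmod rho1 = exp (k * T) /\ Cmod rho2 = exp (k * T).
Proof.
  intros HT Hy [M HM] [z0 Hz0] Hsum Hprod.
  pose proof (ode2_exp_mul_recurrence T y y' y'' HT Hy) as Hrec.
  rewrite ode2_wronskian in Hprod.
  set (E := exp (k * T)) in *. assert (HE : 0 < E) by apply exp_pos.
  assert (Hmod : forall rho, Cmod (rho * RtoC (/ E)) = 1 -> Cmod rho = E).
  { intros rho H. rewrite Cmod_mult, Cmod_R, Rabs_pos_eq in H by (left; apply Rinv_0_lt_compat, HE).
    apply (Rmult_eq_reg_r (/ E)); [rewrite Rinv_r; lra | apply Rinv_neq_0_compat; lra]. }
  destruct (bounded_recurrence_unimodular (fun s => RtoC (y s)) T
              (rho1 * RtoC (/ E)) (rho2 * RtoC (/ E))) as [H1 H2].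
  - exists M. intros s. rewrite Cmod_R. apply HM.
  - exists z0. intros H. apply Hz0. apply (f_equal Re) in H. exact H.
  - transitivity (rho1 * rho2 * RtoC (/ E * / E))%C; [rewrite RtoC_mult; ring|].
    replace (exp (2 * k * T)) with (E * E) in Hprod
      by (unfold E; rewrite <- exp_plus; f_equal; ring).
    rewrite Hprod, <- RtoC_mult. replace (E * E * (/ E * / E)) with 1 by (field; lra).
    reflexivity.
  - intros s.
    transitivity (RtoC (y (s + 2 * T) - (P1 T + P2' T) / E * y (s + T) + y s)).
    + rewrite RtoC_plus, RtoC_minus, !RtoC_mult, RtoC_div by lra.
      rewrite <- Hsum, RtoC_inv by lra. field. intros H; apply (f_equal Re) in H; simpl in H; lra.
    + rewrite Hrec. reflexivity.
  - split; apply Hmod; assumption.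
Qed.

End FundamentalSolutions.

Lemma cos_plus_2PI_IZR x (n : Z) : cos (x + 2 * PI * IZR n) = cos x.
Proof.
  assert (Hsin : sin (PI * IZR n) = 0) by (apply sin_eq_0_1; exists n; ring).
  replace (2 * PI * IZR n) with (2 * (PI * IZR n)) by ring.
  rewrite cos_plus, sin_2a, cos_2a_sin, Hsin. ring.
Qed.

Definition solves_Q_real (c : R) (f : R -> R) (alpha : R) (y y' y'' : R -> R) : Prop :=
  forall z, is_derive y z (y' z) /\ is_derive y' z (y'' z) /\
    y'' z + gam c * cos (f z) * y z = gam c ^ 2 * (alpha * alpha) * y z.

Lemma in_sigmaQ_RtoC_iff c f alpha :
  in_sigmaQ c f (RtoC alpha) <->
  exists y y' y'', solves_Q_real c f alpha y y' y'' /\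
    (exists M, forall z, Rabs (y z) <= M) /\ (exists z, y z <> 0).
Proof.
  split.
  - intros [q [q' [q'' [[z0 Hz0] [[M HM] Hq]]]]].
    assert (Hparts : forall z,
      Re (q'' z) + gam c * cos (f z) * Re (q z) = gam c ^ 2 * (alpha * alpha) * Re (q z) /\
      Im (q'' z) + gam c * cos (f z) * Im (q z) = gam c ^ 2 * (alpha * alpha) * Im (q z)).
    { intros z. destruct (Hq z) as [_ [_ E]].
      apply (f_equal Re) in E as ERe. apply (f_equal Im) in E as EIm.
      destruct (q z), (q'' z). simpl in *. split; nra. }
    destruct (Req_dec (Re (q z0)) 0) as [Hre | Hre].
    + exists (fun z => Im (q z)), (fun z => Im (q' z)), (fun z => Im (q'' z)). split; [|split].
      * intros z. destruct (Hq z) as [Hd [Hd' _]].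
        split; [|split]; [apply is_derive_Im; exact Hd | apply is_derive_Im; exact Hd' | apply Hparts].
      * exists M. intros z. eapply Rle_trans; [|apply (HM z)].
        eapply Rle_trans; [|apply Rmax_Cmod]. apply Rmax_r.
      * exists z0. intros Him. apply Hz0. destruct (q z0). simpl in *. subst. reflexivity.
    + exists (fun z => Re (q z)), (fun z => Re (q' z)), (fun z => Re (q'' z)). split; [|split].
      * intros z. destruct (Hq z) as [Hd [Hd' _]].
        split; [|split]; [apply is_derive_Re; exact Hd | apply is_derive_Re; exact Hd' | apply Hparts].
      * exists M. intros z. eapply Rle_trans; [apply re_le_Cmod | apply HM].
      * exists z0. exact Hre.
  - intros [y [y' [y'' [Hy [[M HM] [z0 Hz0]]]]]].
    exists (fun z => RtoC (y z)), (fun z => RtoC (y' z)), (fun z => RtoC (y'' z)).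
    split; [|split].
    + exists z0. intros H. apply Hz0. apply (f_equal Re) in H. exact H.
    + exists M. intros z. rewrite Cmod_R. apply HM.
    + intros z. destruct (Hy z) as [Hd [Hd' E]].
      split; [|split]; [apply is_derive_RtoC; exact Hd | apply is_derive_RtoC; exact Hd' |].
      rewrite <- !RtoC_mult, <- RtoC_plus, E. reflexivity.
Qed.

Section LibrationalWave.

Variables (c : R) (f : R -> R) (E : R).
Hypothesis wave : traveling_wave c f.
Hypothesis energy : forall z, wave_energy c f z = E.

Lemma wave_derive z : is_derive f z (Derive f z) /\ is_derive (Derive f) z (Derive (Derive f) z).
Proof.
  destruct wave as [_ H]. destruct (H z) as [H1 [H2 _]].
  split; apply Derive_correct; assumption.
Qed.

Lemma wave_speed_ne1 : c ^ 2 - 1 <> 0.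
Proof. destruct wave as [Hc _]. lra. Qed.

Lemma wave_first_integral z : Derive f z ^ 2 = 2 * (E - 1 + cos (f z)) / (c ^ 2 - 1).
Proof.
  pose proof wave_speed_ne1. specialize (energy z). unfold wave_energy in energy.
  field_simplify_eq; [|assumption]. lra.
Qed.

Lemma wave_second_derivative z : Derive (Derive f) z = - sin (f z) / (c ^ 2 - 1).
Proof.
  pose proof wave_speed_ne1 as HD. destruct wave as [_ H]. destruct (H z) as [_ [_ Hz]].
  field_simplify_eq; [|assumption]. lra.
Qed.

Lemma cos_half_solves_Q alpha : alpha * alpha = (1 - E / 2) * (c ^ 2 - 1) ->
  solves_Q_real c f alpha (fun z => cos (f z / 2))
    (fun z => - / 2 * sin (f z / 2) * Derive f z)
    (fun z => - / 4 * cos (f z / 2) * Derive f z ^ 2 - / 2 * sin (f z / 2) * Derive (Derive f) z).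
Proof.
  intros Halpha z. destruct (wave_derive z) as [H1 H2]. pose proof wave_speed_ne1.
  split; [|split]; [auto_derive_hyps; unfold Rdiv; field | auto_derive_hyps; unfold Rdiv; field | cbv beta].
  rewrite wave_first_integral, wave_second_derivative, Halpha.
  replace (cos (f z)) with (1 - 2 * sin (f z / 2) * sin (f z / 2))
    by (rewrite <- cos_2a_sin; f_equal; field).
  replace (sin (f z)) with (2 * sin (f z / 2) * cos (f z / 2))
    by (rewrite <- sin_2a; f_equal; field).
  unfold gam. field. assumption.
Qed.

Lemma sin_half_solves_Q alpha : alpha * alpha = - (E / 2) * (c ^ 2 - 1) ->
  solves_Q_real c f alpha (fun z => sin (f z / 2))
    (fun z => / 2 * cos (f z / 2) * Derive f z)
    (fun z => - / 4 * sin (f z / 2) * Derive f z ^ 2 + / 2 * cos (f z / 2) * Derive (Derive f) z).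
Proof.
  intros Halpha z. destruct (wave_derive z) as [H1 H2]. pose proof wave_speed_ne1.
  split; [|split]; [auto_derive_hyps; unfold Rdiv; field | auto_derive_hyps; unfold Rdiv; field | cbv beta].
  rewrite wave_first_integral, wave_second_derivative, Halpha.
  replace (cos (f z)) with (2 * cos (f z / 2) * cos (f z / 2) - 1)
    by (rewrite <- cos_2a_cos; f_equal; field).
  replace (sin (f z)) with (2 * sin (f z / 2) * cos (f z / 2))
    by (rewrite <- sin_2a; f_equal; field).
  unfold gam. field. assumption.
Qed.

Lemma in_sigmaQ_positive_point : 0 < E < 2 -> exists alpha, 0 < alpha /\ in_sigmaQ c f (RtoC alpha).
Proof.
  intros HE. pose proof wave_speed_ne1 as HD.
  pose proof (energy 0) as E0. unfold wave_energy in E0.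
  pose proof (pow2_ge_0 (Derive f 0)).
  destruct (Rlt_or_le 1 (c ^ 2)) as [Hgt | Hle].
  - assert (Hpos : 0 < (1 - E / 2) * (c ^ 2 - 1)) by nra.
    exists (sqrt ((1 - E / 2) * (c ^ 2 - 1))). split; [apply sqrt_lt_R0, Hpos|].
    apply in_sigmaQ_RtoC_iff. eexists _, _, _. split; [|split].
    + apply cos_half_solves_Q, sqrt_sqrt. lra.
    + exists 1. intros z. apply Rabs_le, COS_bound.
    + (* otherwise cos (f 0) = -1, which forces E >= 2 *)
      exists 0. intros H0.
      replace (cos (f 0)) with (2 * cos (f 0 / 2) * cos (f 0 / 2) - 1) in E0
        by (rewrite <- cos_2a_cos; f_equal; field).
      rewrite H0 in E0. nra.
  - assert (Hpos : 0 < - (E / 2) * (c ^ 2 - 1)) by (destruct wave as [Hc _]; nra).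
    exists (sqrt (- (E / 2) * (c ^ 2 - 1))). split; [apply sqrt_lt_R0, Hpos|].
    apply in_sigmaQ_RtoC_iff. eexists _, _, _. split; [|split].
    + apply sin_half_solves_Q, sqrt_sqrt. lra.
    + exists 1. intros z. apply Rabs_le, SIN_bound.
    + (* otherwise cos (f 0) = 1, which forces E <= 0 *)
      exists 0. intros H0.
      replace (cos (f 0)) with (1 - 2 * sin (f 0 / 2) * sin (f 0 / 2)) in E0
        by (rewrite <- cos_2a_sin; f_equal; field).
      rewrite H0 in E0. destruct wave as [Hc _]. nra.
Qed.

End LibrationalWave.

Definition P_coeff (c : R) (f : R -> R) (alpha : R) (z : R) : R := gam c * (alpha ^ 2 + cos (f z)).

Lemma P_coeff_bounded c f alpha z : Rabs (P_coeff c f alpha z) <= Rabs (gam c) * (alpha ^ 2 + 1).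
Proof.
  unfold P_coeff. rewrite Rabs_mult. apply Rmult_le_compat_l; [apply Rabs_pos|].
  pose proof (COS_bound (f z)). apply Rabs_le. nra.
Qed.

Lemma P_coeff_periodic c f alpha T : period_mod_2pi f T ->
  forall z, P_coeff c f alpha (z + T) = P_coeff c f alpha z.
Proof.
  intros Hper z. unfold P_coeff. destruct (Hper z) as [n ->]. rewrite cos_plus_2PI_IZR. reflexivity.
Qed.

Lemma solves_P_Re_Im c f alpha p p' p'' : solves_P c f (RtoC alpha) p p' p'' ->
  solves_ode2 (c * gam c * alpha) (P_coeff c f alpha)
    (fun z => Re (p z)) (fun z => Re (p' z)) (fun z => Re (p'' z)) /\
  solves_ode2 (c * gam c * alpha) (P_coeff c f alpha)
    (fun z => Im (p z)) (fun z => Im (p' z)) (fun z => Im (p'' z)).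
Proof.
  intros Hp. split; intros z; destruct (Hp z) as [Hd [Hd' E]];
    (split; [|split]; [auto using is_derive_Re, is_derive_Im ..|]).
  - apply (f_equal Re) in E. unfold P_coeff. destruct (p z), (p' z), (p'' z). simpl in *. nra.
  - apply (f_equal Im) in E. unfold P_coeff. destruct (p z), (p' z), (p'' z). simpl in *. nra.
Qed.

Lemma C_eq_RtoC_Re (w : C) : Im w = 0 -> w = RtoC (Re w).
Proof. destruct w as [x y]. simpl. intros ->. reflexivity. Qed.

Lemma monodromy_real c f alpha T a b d e :
  monodromy c f (RtoC alpha) T a b d e ->
  exists P1 P1' P1'' P2 P2' P2'',
    solves_ode2 (c * gam c * alpha) (P_coeff c f alpha) P1 P1' P1'' /\
    solves_ode2 (c * gam c * alpha) (P_coeff c f alpha) P2 P2' P2'' /\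
    (P1 0 = 1 /\ P1' 0 = 0) /\ (P2 0 = 0 /\ P2' 0 = 1) /\
    a = RtoC (P1 T) /\ b = RtoC (P2 T) /\ d = RtoC (P1' T) /\ e = RtoC (P2' T).
Proof.
  intros [p1 [p1' [p1'' [p2 [p2' [p2'' [S1 [S2 [I1 [I1' [I2 [I2' [-> [-> [-> ->]]]]]]]]]]]]]]].
  pose proof (P_coeff_bounded c f alpha) as HB.
  destruct (solves_P_Re_Im c f alpha _ _ _ S1) as [R1 J1].
  destruct (solves_P_Re_Im c f alpha _ _ _ S2) as [R2 J2].
  assert (Im1 := ode2_unique _ _ _ _ _ _ HB J1).
  assert (Im2 := ode2_unique _ _ _ _ _ _ HB J2).
  simpl in Im1, Im2. rewrite I1, I1' in Im1. rewrite I2, I2' in Im2.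
  specialize (Im1 eq_refl eq_refl T). specialize (Im2 eq_refl eq_refl T).
  do 6 eexists. split; [exact R1|]. split; [exact R2|].
  rewrite I1, I1', I2, I2'. split; [split; reflexivity|]. split; [split; reflexivity|].
  split; [|split; [|split]]; apply C_eq_RtoC_Re; tauto.
Qed.

Lemma solves_Q_real_ode2 c f alpha y y' y'' : c ^ 2 - 1 <> 0 ->
  solves_Q_real c f alpha y y' y'' ->
  forall z, is_derive y z (y' z) /\ is_derive y' z (y'' z) /\
            y'' z = ((c * gam c * alpha) ^ 2 - P_coeff c f alpha z) * y z.
Proof.
  intros Hc Hy z. destruct (Hy z) as [Hd [Hd' E]]. split; [|split]; [exact Hd | exact Hd' |].
  apply (Rplus_eq_reg_r (gam c * cos (f z) * y z)). rewrite E. unfold P_coeff, gam. field. exact Hc.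
Qed.

Lemma Gp_pos_of_in_sigmaQ c f alpha T : c ^ 2 - 1 <> 0 -> c <> 0 -> 0 < alpha ->
  in_sigmaQ c f (RtoC alpha) -> 0 < T -> period_mod_2pi f T -> Gp_pos c f T (RtoC alpha).
Proof.
  intros Hc Hc0 Halpha Hsigma HT Hper a b d e Hmono rho1 rho2 [Hsum Hprod].
  destruct (monodromy_real c f alpha T a b d e Hmono)
    as [P1 [P1' [P1'' [P2 [P2' [P2'' [S1 [S2 [I1 [I2 [-> [-> [-> ->]]]]]]]]]]]]].
  destruct (proj1 (in_sigmaQ_RtoC_iff c f alpha) Hsigma) as [y [y' [y'' [Hy [Hbd Hnz]]]]].
  rewrite <- RtoC_plus in Hsum. rewrite <- !RtoC_mult, <- RtoC_minus in Hprod.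
  destruct (ode2_multipliers_modulus _ _ _ _ _ _ _ _ S1 S2 I1 I2 _ (P_coeff_bounded c f alpha)
              T y y' y'' rho1 rho2 (P_coeff_periodic c f alpha T Hper)
              (solves_Q_real_ode2 c f alpha y y' y'' Hc Hy) Hbd Hnz Hsum Hprod) as [H1 H2].
  rewrite H1, H2, ln_exp.
  assert (HkT : c * gam c * alpha * T <> 0).
  { unfold gam. repeat apply Rmult_integral_contrapositive_currified; try lra.
    apply Rinv_neq_0_compat. exact Hc. }
  pose proof (Rsqr_pos_lt _ HkT). unfold Rsqr in *. lra.
Qed.

Theorem lemma3p13 (c : R) (f : R -> R) :
  librational_wave c f ->
  (exists alpha : R, 0 < alpha /\ in_sigmaQ c f (RtoC alpha)) /\
  (c <> 0 ->
   forall alpha : R, 0 < alpha -> in_sigmaQ c f (RtoC alpha) ->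
   forall T : R, fundamental_period f T ->
   Gp_pos c f T (RtoC alpha)).
Proof.
  intros [Hwave [E [HE Henergy]]]. split.
  - exact (in_sigmaQ_positive_point c f E Hwave Henergy HE).
  - intros Hc0 alpha Halpha Hsigma T [HT [Hper _]].
    exact (Gp_pos_of_in_sigmaQ c f alpha T (wave_speed_ne1 c f Hwave) Hc0 Halpha Hsigma HT Hper).
Qed.
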